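(* Assume $l=-\infty$ and $r=\infty$. The following are equivalent: (a) there exists $y\in I$ such that $G_y(a)<\infty$ for all $a>0$; (b) $G_y(a)<\infty$ for all $y\in I$ and all $a>0$.
   Context: Let $-\infty\le l<r\le\infty$, $I=(l,r)$, $\eta\colon\mathbb R\to\mathbb R$ Borel with $\eta\ne0$ on $I$, $1/\eta^2\in L^1_{\mathrm{loc}}(I)$, $\eta=0$ off $I$. For $y\in I$, $x\in\mathbb R$, $q(y,x)=\int_y^x\int_y^u\frac{2}{\eta^2(z)}\,dz\,du\in[0,\infty]$. Let $\mu\ne\delta_0$ be a centered probability measure on $\mathbb R$ with finite first moment. For $y\in I$, $a\ge0$, $G_y(a)=\int_{\mathbb R} q(y,y+ax)\,\mu(dx)\in[0,\infty]$. *)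

From HB Require Import structures.
From mathcomp Require Import all_boot all_order all_algebra.
From mathcomp Require Import all_classical all_reals all_analysis.
Set Implicit Arguments. Unset Strict Implicit. Unset Printing Implicit Defensive.
Import Order.TTheory GRing.Theory Num.Theory.
Local Open Scope classical_set_scope.
Local Open Scope ring_scope.
Local Open Scope ereal_scope.

Definition oint {R : realType} (a b : R) (f : R -> \bar R) : \bar R :=
  if (a <= b)%R then \int[@lebesgue_measure R]_(x in `[a, b]) f x
  else - \int[@lebesgue_measure R]_(x in `[b, a]) f x.

Definition qfun {R : realType} (eta : R -> R) (y x : R) : \bar R :=
  oint y x (fun u => oint y u (fun z => (2 / (eta z ^+ 2))%:E)).

Definition Gfun {R : realType} (eta : R -> R)
    (mu : probability R R) (y a : R) : \bar R :=
  \int[mu]_x qfun eta y (y + a * x)%R.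

From HB Require Import structures.
From mathcomp Require Import all_boot all_order all_algebra.
From mathcomp Require Import all_classical all_reals all_analysis.
From mathcomp Require Import ring lra measurable_realfun.
Import Order.TTheory GRing.Theory Num.Theory.
Local Open Scope classical_set_scope.
Local Open Scope ring_scope.

(* Let F_y be the primitive of g = 2/eta^2 vanishing at y, so that q(y, .)
   is the primitive of F_y vanishing at y.  Moving the base point from y to
   y' changes F by a constant, hence q by an affine function of x.  Since
   q(y, .) is nonnegative, nonincreasing left of y and nondecreasing right of
   y, q(y, y + t + s) <= q(y, y + 2t) + q(y, y + 2s).  Hence
   q(y', y' + a x) <= q(y, y + 2a x) + K + C |x|, and integrating against mu,
   which has a first moment, gives G_y'(a) <= G_y(2a) + K + C E|X| < oo. *)

Section OrientedIntegral.
Context {R : realType}.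
Local Notation lebesgue := (@lebesgue_measure R).

Definition oRintegral (h : R -> R) (a b : R) : R :=
  if a <= b then \int[lebesgue]_(x in `[a, b]) h x
  else - \int[lebesgue]_(x in `[b, a]) h x.

Definition segment_integrable (h : R -> R) :=
  forall a b : R, lebesgue.-integrable `[a, b] (EFin \o h).

Lemma segment_integrable_cst c : segment_integrable (cst c).
Proof.
move=> a b; apply: continuous_compact_integrable; first exact: segment_compact.
by move=> x; apply: continuous_subspaceT => z; exact: cst_continuous.
Qed.

Lemma oRintegral_id h a : oRintegral h a a = 0.
Proof. by rewrite /oRintegral lexx set_itv1 Rintegral_set1. Qed.

Lemma oRintegralC h a b : oRintegral h a b = - oRintegral h b a.
Proof.
rewrite /oRintegral; case: (ltgtP a b) => [_|_|->]; rewrite ?opprK //.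
by rewrite set_itv1 Rintegral_set1 oppr0.
Qed.

Section Chasles.
Context {h : R -> R}.
Hypothesis h_int : segment_integrable h.

Lemma oRintegral_chasles_le a b c : a <= b -> b <= c ->
  oRintegral h a c = oRintegral h a b + oRintegral h b c.
Proof.
move=> ab bc; rewrite /oRintegral ab bc (le_trans ab bc).
have := @Rintegral_itvB R h (BLeft a) (BRight c) b (h_int a c).
rewrite !bnd_simp => /(_ ab bc); rewrite Rintegral_itv_obnd_cbnd.
  by move=> <-; rewrite addrC subrK.
by apply: integrableS (h_int b c) => //; apply: subset_itvr; rewrite bnd_simp.
Qed.

Lemma oRintegral_chasles a b c :
  oRintegral h a c = oRintegral h a b + oRintegral h b c.
Proof.
have O := oRintegral_chasles_le; have C := oRintegralC h.
case: (leP a b) => ab; case: (leP b c) => bc.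
- exact: O.
- case: (leP a c) => ac.
  + by rewrite (C b c) (O a c b) ?(ltW bc) //; ring.
  + by rewrite (C a c) (C b c) (O c a b) ?(ltW ac) //; ring.
- case: (leP a c) => ac.
  + by rewrite (C a b) (O b a c) ?(ltW ab) //; ring.
  + by rewrite (C a c) (C a b) (O b c a) ?(ltW ac) //; ring.
- by rewrite (C a c) (C a b) (C b c) (O c b a) ?(ltW ab) ?(ltW bc) //; ring.
Qed.

Lemma oint_EFin a b : oint a b (EFin \o h) = (oRintegral h a b)%:E.
Proof.
have fin x y : (\int[lebesgue]_(z in `[x, y]) (h z)%:E)%E \is a fin_num.
  exact: integrable_fin_num (h_int x y).
by rewrite /oint /oRintegral; case: ifP => _; rewrite ?EFinN /Rintegral fineK.
Qed.

Lemma oRintegral_ge0 a b : a <= b -> (forall x, a <= x <= b -> 0 <= h x) ->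
  0 <= oRintegral h a b.
Proof.
move=> ab h0; rewrite /oRintegral ab; apply: Rintegral_ge0 => x /=.
by rewrite in_itv; exact: h0.
Qed.

Lemma oRintegral_le0 a b : a <= b -> (forall x, a <= x <= b -> h x <= 0) ->
  oRintegral h a b <= 0.
Proof.
move=> ab h0; rewrite /oRintegral ab.
apply: (@le_trans _ _ (\int[lebesgue]_(x in `[a, b]) (cst 0 x))).
  by apply: le_Rintegral => //; exact: segment_integrable_cst.
by rewrite /cst Rintegral_cst // mul0r.
Qed.

Lemma oRintegralDr c a b :
  oRintegral (fun u => h u + c) a b = oRintegral h a b + c * (b - a).
Proof.
have c_int := segment_integrable_cst c.
have len x y : x <= y -> fine (lebesgue `[x, y]) = y - x.
  move=> xy; rewrite lebesgue_measure_itv /= lte_fin.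
  by case: ltgtP xy => // -> _; rewrite subrr.
rewrite /oRintegral; case: ifP => ab.
  by rewrite RintegralD // Rintegral_cst // len.
have ba : b <= a by rewrite ltW // ltNge ab.
by rewrite RintegralD // Rintegral_cst // len // opprD -mulrN opprB.
Qed.

End Chasles.

Lemma nondecreasing_segment_integrable f :
  {homo f : x y / x <= y} -> segment_integrable f.
Proof.
move=> f_nd a b; apply: measurable_bounded_integrable => //.
- by apply: compact_finite_measure; exact: segment_compact.
- exact: nondecreasing_measurable.
exists (`|f a| + `|f b|); split; first by rewrite num_real.
move=> M hM x; rewrite /= in_itv /= => /andP[ax xb]; apply: le_trans (ltW hM).
have fa := f_nd _ _ ax; have fb := f_nd _ _ xb.
have := ler_norm (f b); have := ler_norm (- f a); rewrite normrN.
have := normr_ge0 (f a); have := normr_ge0 (f b).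
rewrite ler_norml; lra.
Qed.

End OrientedIntegral.

Section Valley.
Context {R : realType}.

Definition valley (f : R -> R) (y : R) :=
  (forall x1 x2, y <= x1 -> x1 <= x2 -> f x1 <= f x2) /\
  (forall x1 x2, x1 <= y -> x2 <= x1 -> f x1 <= f x2).

Lemma valley_add_le f y u v : valley f y -> (forall x, 0 <= f x) ->
  f (y + u + v) <= f (y + 2 * u) + f (y + 2 * v).
Proof.
move=> [fr fl] f0; have fu := f0 (y + 2 * u); have fv := f0 (y + 2 * v).
suff : f (y + u + v) <= f (y + 2 * u) \/ f (y + u + v) <= f (y + 2 * v).
  by case; lra.
case: (leP 0 (u + v)) => uv; case: (leP v u) => vu.
- by left; apply: fr; lra.
- by right; apply: fr; lra.
- by right; apply: fl; lra.
- by left; apply: fl; lra.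
Qed.

Lemma valley_measurable f y : valley f y -> measurable_fun setT f.
Proof.
move=> [fr fl].
have -> : f = fun x => f (Num.max x y) + f (Num.min x y) - f y.
  by apply/funext => x; case: (leP x y) => _; ring.
apply: measurable_funB => //; apply: measurable_funD.
  apply: nondecreasing_measurable => // u v uv.
  apply: fr; first by rewrite le_max lexx orbT.
  by rewrite ge_max !le_max uv lexx orbT.
apply: nonincreasing_measurable => // u v uv.
apply: fl; first by rewrite ge_min lexx orbT.
by rewrite le_min !ge_min uv lexx orbT.
Qed.

End Valley.

Section SecondPrimitive.
Context {R : realType}.
Variable g : R -> R.
Hypothesis g_ge0 : forall z, 0 <= g z.
Hypothesis g_int : segment_integrable g.

Definition second_primitive (y x : R) : R := oRintegral (oRintegral g y) y x.

Lemma primitive_nondecreasing y : {homo oRintegral g y : u v / u <= v}.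
Proof.
move=> u v uv; rewrite (oRintegral_chasles g_int y u v) lerDl.
exact: oRintegral_ge0.
Qed.

Lemma primitive_segment_integrable y : segment_integrable (oRintegral g y).
Proof. exact/nondecreasing_segment_integrable/primitive_nondecreasing. Qed.

Lemma second_primitive_valley y : valley (second_primitive y) y.
Proof.
have F_y : oRintegral g y y = 0 := oRintegral_id g y.
split=> x1 x2 yx1 x12; rewrite /second_primitive
  (oRintegral_chasles (primitive_segment_integrable y) y x1 x2).
  rewrite lerDl; apply: oRintegral_ge0 => // x /andP[x1x _].
  by rewrite -F_y; apply: primitive_nondecreasing; exact: le_trans x1x.
rewrite (oRintegralC _ x1 x2) lerDl oppr_ge0.
apply: (oRintegral_le0 (primitive_segment_integrable y)) => // x /andP[_ xx1].
by rewrite -F_y; apply: primitive_nondecreasing; exact: le_trans yx1.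
Qed.

Lemma second_primitive_ge0 y x : 0 <= second_primitive y x.
Proof.
have [fr fl] := second_primitive_valley y.
rewrite -(oRintegral_id (oRintegral g y) y) -/(second_primitive y y).
by case: (leP y x) => yx; [exact: fr | apply: fl => //; exact: ltW].
Qed.

Lemma second_primitive_shift y y' x :
  second_primitive y' x = second_primitive y x
    - oRintegral g y y' * (x - y) - oRintegral (oRintegral g y') y y'.
Proof.
rewrite /second_primitive; set c := oRintegral g y y'.
have -> : oRintegral g y = fun u => oRintegral g y' u + c.
  by apply/funext => u; rewrite (oRintegral_chasles g_int y y' u) addrC.
have F_int := primitive_segment_integrable y'.
by rewrite oRintegralDr // (oRintegral_chasles F_int y y' x); ring.
Qed.

Lemma second_primitive_shift_le y y' : exists K C, forall t,
  second_primitive y' (y' + t) <= second_primitive y (y + 2 * t) + K + C * `|t|.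
Proof.
set c := oRintegral g y y'; set d := oRintegral (oRintegral g y') y y'.
set s := y' - y.
exists (second_primitive y (y + 2 * s) + `|c| * `|s| + `|d|), `|c| => t.
have := valley_add_le _ _ t s (second_primitive_valley y).
move=> /(_ (second_primitive_ge0 y)).
have -> : y + t + s = y' + t by rewrite /s; ring.
rewrite (second_primitive_shift y y') -/c -/d.
have -> : y' + t - y = t + s by rewrite /s; ring.
have := ler_norm (- d); have := ler_norm (- (c * (t + s))).
rewrite !normrN normrM.
have := ler_wpM2l (normr_ge0 c) (ler_normD t s); rewrite mulrDr; lra.
Qed.

End SecondPrimitive.

Lemma ge0_integral_lty_linear_bound {R : realType}
    (mu : {finite_measure set R -> \bar R}) (f h : R -> R) (K C : R) :
  measurable_fun setT f -> measurable_fun setT h ->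
  (forall x, 0 <= f x) -> (forall x, 0 <= h x) ->
  mu.-integrable setT EFin -> (forall x, f x <= h x + K + C * `|x|) ->
  (\int[mu]_x (h x)%:E < +oo)%E -> (\int[mu]_x (f x)%:E < +oo)%E.
Proof.
move=> mf mh f0 h0 mu_int le_fh hfin.
have h_int : mu.-integrable setT (EFin \o h).
  apply/integrableP; split; first exact/measurable_EFinP.
  rewrite (eq_integral (fun x => (h x)%:E)) // => x _.
  by apply: gee0_abs; rewrite lee_fin.
pose bound x := ((h x)%:E + ((EFin \o cst K) x + C%:E * (abse \o EFin) x))%E.
have bound_int : mu.-integrable setT bound.
  apply: integrableD => //; apply: integrableD => //.
    exact: finite_measure_integrable_cst.
  by apply: integrableZl => //; exact: integrable_abse.
apply: le_lt_trans (integrable_lty _ bound_int) => //.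
apply: ge0_le_integral => //.
- by move=> x _; rewrite lee_fin.
- exact/measurable_EFinP.
- exact: measurable_int bound_int.
by move=> x _; rewrite /bound /= -EFinM -!EFinD lee_fin addrA.
Qed.

Local Open Scope ereal_scope.

Theorem mainTheorem2 (R : realType) (eta : R -> R) (mu : probability R R)
  (eta_meas : measurable_fun setT eta)
  (eta_ne0 : forall x : R, eta x != 0%R)
  (eta_loc : forall a b : R,
      (@lebesgue_measure R).-integrable `[a, b] (fun z => (1 / (eta z ^+ 2))%:E))
  (mu_int : mu.-integrable setT (fun x : R => x%:E))
  (mu_centered : \int[mu]_x (x%:E) = 0)
  (mu_not_dirac : exists A : set R, measurable A /\ mu A <> \d_(0%R : R) A) :
  (exists y : R, forall a : R, (0 < a)%R -> Gfun eta mu y a < +oo) <->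
  (forall y a : R, (0 < a)%R -> Gfun eta mu y a < +oo).
Proof.
split=> [[y Gy] y' a a0|G]; last by exists 0%R => a; exact: G.
pose g z := (2 / eta z ^+ 2)%R.
have g_ge0 z : (0 <= g z)%R by rewrite divr_ge0 // sqr_ge0.
have g_int : segment_integrable g.
  move=> u v; apply: eq_integrable (integrableZl _ 2 (eta_loc u v)) => //.
  by move=> z _ /=; rewrite -EFinM mul1r.
have GE z b :
    Gfun eta mu z b = \int[mu]_x (second_primitive g z (z + b * x))%:E.
  apply: eq_integral => x _; rewrite /qfun.
  have -> : (fun u => oint z u (EFin \o g)) = EFin \o oRintegral g z.
    by apply/funext => u; rewrite oint_EFin.
  by rewrite oint_EFin //; exact: primitive_segment_integrable.
have meas (z b : R) :
    measurable_fun setT (fun x : R => second_primitive g z (z + b * x)%R).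
  apply: measurableT_comp.
    exact: valley_measurable (second_primitive_valley _ g_ge0 g_int z).
  by apply: measurable_funD => //; exact: measurable_funM.
have [K [C shift_le]] := second_primitive_shift_le _ g_ge0 g_int y y'.
rewrite GE; apply: (@ge0_integral_lty_linear_bound _ mu
  (fun x => second_primitive g y' (y' + a * x)%R)
  (fun x => second_primitive g y (y + (2 * a) * x)%R) K (C * a)%R).
- exact: meas.
- exact: meas.
- by move=> x; exact: second_primitive_ge0.
- by move=> x; exact: second_primitive_ge0.
- exact: mu_int.
- by move=> x; have := shift_le (a * x)%R; rewrite normrM (gtr0_norm a0) !mulrA.
by rewrite -GE; apply: Gy; rewrite mulr_gt0.
Qed.
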